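(* Let $U$ be a finite set of men and $W_1\subseteq W_2$ finite sets of women with $|W_1|\le|W_2|=|U|$, each man having a strict total order over $W_2$ and each woman a strict total order over $U$. Let $M_1'$ be a stable matching of $(U,W_1)$ and $M_2$ a stable matching of $(U,W_2)$. Define $M_2'$ as the union of: the pairs of $M_1'\cap M_2$; for each path component of $G(M_1',M_2)$, its edges belonging to $M_2$; for each cycle of $G(M_1',M_2)$ of Type I, its edges belonging to $M_2$; for each cycle of $G(M_1',M_2)$ of Type II, its edges belonging to $M_1'$. Then $M_2'$ is a perfect matching between $U$ and $W_2$ and it is stable for the instance $(U,W_2)$.
   Context: A matching is a set of man–woman pairs with each person in at most one pair; a blocking pair of $M$ is a pair $(u,w)\notin M$ with ($u$ unmatched or preferring $w$ to his partner) and ($w$ unmatched or preferring $u$ to her partner); a matching is stable if it has no blocking pair. Preferences in a sub-instance are restrictions of the given ones. The difference graph $G(M,M')$ has vertex set $U\cup W_2$ and edge set $M\triangle M'$. A cycle $C$ of $G(M_1',M_2)$ is of Type I if every man in $C$ strictly prefers his partner in $M_2$ to his partner in $M_1'$ and every woman in $C$ strictly prefers her partner in $M_1'$ to her partner in $M_2$; it is of Type II if every man in $C$ strictly prefers his partner in $M_1'$ to his partner in $M_2$ and every woman in $C$ strictly prefers her partner in $M_2$ to her partner in $M_1'$ (every cycle is of one of these types). *)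

From mathcomp Require Import all_boot all_order.
Set Implicit Arguments. Unset Strict Implicit. Unset Printing Implicit Defensive.

(* Men are the elements of a finType U, women the elements of a finType W
   (W plays the role of W_2); W_1 is a subset of W. *)

Definition strict_total_order (T : eqType) (r : rel T) : Prop :=
  irreflexive r /\ transitive r /\ (forall x y, x != y -> r x y || r y x).

Section SM.
Variables (U W : finType).
(* pU u w w' : man u strictly prefers w to w';
   pW w u u' : woman w strictly prefers u to u'. *)
Variables (pU : U -> rel W) (pW : W -> rel U).

Definition is_matching (M : {set U * W}) : Prop :=
  forall p q, p \in M -> q \in M -> (p.1 = q.1 \/ p.2 = q.2) -> p = q.

Definition matching_of (W' : {set W}) (M : {set U * W}) : Prop :=
  is_matching M /\ (forall p, p \in M -> p.2 \in W').

Definition blocking (M : {set U * W}) (u : U) (w : W) : Prop :=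
  (u, w) \notin M /\
  (forall w', (u, w') \in M -> pU u w w') /\
  (forall u', (u', w) \in M -> pW w u u').

Definition stable_in (W' : {set W}) (M : {set U * W}) : Prop :=
  matching_of W' M /\ (forall u w, w \in W' -> ~ blocking M u w).

Definition perfect_matching (M : {set U * W}) : Prop :=
  is_matching M /\ (forall u, exists w, (u, w) \in M)
                /\ (forall w, exists u, (u, w) \in M).

Definition dadj (M M' : {set U * W}) : rel (U + W) :=
  fun x y => match x, y with
  | inl u, inr w => (u, w) \in (M :|: M') :\: (M :&: M')
  | inr w, inl u => (u, w) \in (M :|: M') :\: (M :&: M')
  | _, _ => false
  end.

Definition ddeg (M M' : {set U * W}) (x : U + W) : nat := #|dadj M M' x|.

(* the connected component of v in G(M,M') is a cycle
   (G has maximum degree 2, so this means every vertex of it has degree 2) *)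
Definition comp_cycle (M M' : {set U * W}) (v : U + W) : bool :=
  [forall x, connect (dadj M M') v x ==> (ddeg M M' x == 2)].

Definition typeI (M1 M2 : {set U * W}) (v : U + W) : bool :=
  [forall u, connect (dadj M1 M2) v (inl u) ==>
     [forall w1, [forall w2, ((u, w1) \in M1) && ((u, w2) \in M2) ==> pU u w2 w1]]]
  && [forall w, connect (dadj M1 M2) v (inr w) ==>
     [forall u1, [forall u2, ((u1, w) \in M1) && ((u2, w) \in M2) ==> pW w u1 u2]]].

Definition typeII (M1 M2 : {set U * W}) (v : U + W) : bool :=
  [forall u, connect (dadj M1 M2) v (inl u) ==>
     [forall w1, [forall w2, ((u, w1) \in M1) && ((u, w2) \in M2) ==> pU u w1 w2]]]
  && [forall w, connect (dadj M1 M2) v (inr w) ==>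
     [forall u1, [forall u2, ((u1, w) \in M1) && ((u2, w) \in M2) ==> pW w u2 u1]]].

(* M2' built from M1' (here M1) and M2; the component of an edge (u,w) of
   G(M1,M2) is the component of the vertex inl u. *)
Definition M2prime (M1 M2 : {set U * W}) : {set U * W} :=
  [set p | (p \in M1 :&: M2)
        || ((p \in M2 :\: M1) &&
              (~~ comp_cycle M1 M2 (inl p.1) || typeI M1 M2 (inl p.1)))
        || ((p \in M1 :\: M2) &&
              comp_cycle M1 M2 (inl p.1) && typeII M1 M2 (inl p.1))].

End SM.

From mathcomp Require Import all_boot all_order.
Set Implicit Arguments. Unset Strict Implicit. Unset Printing Implicit Defensive.

(* Since |W2| = |U|, the stable matching M2 is perfect.  Call a man M1-preferring
   if he strictly prefers his M1'-partner w to his M2-partner.  Stability of M2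
   makes the M2-partner y of w preferred by w, and stability of M1' then makes y
   M1-preferring as well; by counting, every M1-preferring man arises this way.
   So the M1-preferring men and their M1'-partners form whole components of
   G(M1',M2) in which every vertex has degree 2: cycles of Type II.  A cycle
   without M1-preferring men is of Type I, again by stability of M1'.  Hence M2'
   takes the M1'-edges exactly around the M1-preferring men and the M2-edges
   elsewhere; these two parts never share a vertex, so M2' is a perfect matching.
   Finally a blocking pair (u,w) of M2' makes u prefer w to his M2-partner, so
   by stability of M2 the woman w is not with her M2-partner in M2', hence with
   her M1'-partner, and stability of M1' makes u M1-preferring with w below his
   M1'-partner, which is his M2'-partner. *)

Section StrictTotalOrder.
Variables (T : eqType) (r : rel T).
Hypothesis r_sto : strict_total_order r.

Lemma sto_irr x : r x x = false.
Proof. by case: r_sto => irr _; apply: irr. Qed.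

Lemma sto_trans x y z : r x y -> r y z -> r x z.
Proof. by case: r_sto => _ [tr _]; apply: tr. Qed.

Lemma sto_asym x y : r x y -> r y x = false.
Proof. by move=> rxy; apply/negP => /(sto_trans rxy); rewrite sto_irr. Qed.

Lemma sto_total x y : x != y -> ~~ r x y -> r y x.
Proof. by case: r_sto => _ [_ tot] /tot; case: (r x y). Qed.

End StrictTotalOrder.

Section Matchings.
Variables U W : finType.
Implicit Types (M : {set U * W}) (u : U) (w : W).

Lemma matching_eq_snd M : is_matching M ->
  forall u w w', (u, w) \in M -> (u, w') \in M -> w = w'.
Proof. by move=> hM u w w' h h'; case: (hM _ _ h h' (or_introl erefl)). Qed.

Lemma matching_eq_fst M : is_matching M ->
  forall u u' w, (u, w) \in M -> (u', w) \in M -> u = u'.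
Proof. by move=> hM u u' w h h'; case: (hM _ _ h h' (or_intror erefl)). Qed.

Lemma matching_subset M M' : M' \subset M -> is_matching M -> is_matching M'.
Proof. by move=> /subsetP sub hM p q /sub hp /sub hq; apply: hM. Qed.

Lemma card_matching_fst M : is_matching M -> #|[set p.1 | p in M]| = #|M|.
Proof. by move=> hM; apply: card_in_imset => p q hp hq e; apply: hM => //; left. Qed.

Lemma card_matching_snd M : is_matching M -> #|[set p.2 | p in M]| = #|M|.
Proof. by move=> hM; apply: card_in_imset => p q hp hq e; apply: hM => //; right. Qed.

Lemma matched_fstP M u : reflect (exists w, (u, w) \in M) (u \in [set p.1 | p in M]).
Proof.
apply: (iffP imsetP) => [[p hp ->]|[w hw]]; last by exists (u, w).
by exists p.2; rewrite -surjective_pairing.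
Qed.

Lemma matched_sndP M w : reflect (exists u, (u, w) \in M) (w \in [set p.2 | p in M]).
Proof.
apply: (iffP imsetP) => [[p hp ->]|[u hu]]; last by exists (u, w).
by exists p.1; rewrite -surjective_pairing.
Qed.

Lemma matching_perfect M : is_matching M -> #|W| = #|U| ->
  (forall u, exists w, (u, w) \in M) -> perfect_matching M.
Proof.
move=> hM hWU men; do 2![split => //] => w; apply/matched_sndP.
suff -> : [set p.2 | p in M] = [set: W] by rewrite inE.
apply/eqP; rewrite eqEcard subsetT cardsT card_matching_snd // hWU.
rewrite -(card_matching_fst hM) -cardsT subset_leq_card //.
by apply/subsetP => u _; apply/matched_fstP.
Qed.

Lemma dadj_manE M M' u w : dadj M M' (inl u) (inr w) =
  ((u, w) \in M) && ((u, w) \notin M') || ((u, w) \in M') && ((u, w) \notin M).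
Proof. by rewrite /= !inE; case: ((u, w) \in M); case: ((u, w) \in M'). Qed.

Lemma dadj_womanE M M' u w : dadj M M' (inr w) (inl u) = dadj M M' (inl u) (inr w).
Proof. by []. Qed.

Lemma dadj_sym M M' : symmetric (dadj M M').
Proof. by case=> [u|w] [u'|w']. Qed.

Section DifferenceGraphDegrees.
Variables M M' : {set U * W}.
Hypotheses (hM : is_matching M) (hM' : is_matching M').

Lemma ddeg_man2 u w w' : (u, w) \in M -> (u, w') \in M' -> w != w' ->
  ddeg M M' (inl u) = 2.
Proof.
move=> h h' ww'.
rewrite /ddeg (@eq_card _ _ [set inr w; inr w']) ?cards2 ?(inj_eq inr_inj) ?ww' //.
case=> [u'|v]; rewrite !inE //= -[_ \in _]/(dadj M M' (inl u) (inr v)) dadj_manE.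
apply/idP/idP => [/orP[/andP[hv _]|/andP[hv _]]|/orP[]/eqP[->]].
- by rewrite (matching_eq_snd hM h hv) eqxx.
- by rewrite (matching_eq_snd hM' h' hv) eqxx orbT.
- suff hn : (u, w) \notin M' by rewrite h hn.
  by apply/negP => /(matching_eq_snd hM' h') eww'; rewrite eww' eqxx in ww'.
- suff hn : (u, w') \notin M by rewrite h' hn orbT.
  by apply/negP => /(matching_eq_snd hM h) eww'; rewrite eww' eqxx in ww'.
Qed.

Lemma ddeg_woman2 u u' w : (u, w) \in M -> (u', w) \in M' -> u != u' ->
  ddeg M M' (inr w) = 2.
Proof.
move=> h h' uu'.
rewrite /ddeg (@eq_card _ _ [set inl u; inl u']) ?cards2 ?(inj_eq inl_inj) ?uu' //.
case=> [v|w'']; rewrite !inE //=.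
rewrite -[_ \in _]/(dadj M M' (inr w) (inl v)) dadj_womanE dadj_manE.
apply/idP/idP => [/orP[/andP[hv _]|/andP[hv _]]|/orP[]/eqP[->]].
- by rewrite (matching_eq_fst hM h hv) eqxx.
- by rewrite (matching_eq_fst hM' h' hv) eqxx orbT.
- suff hn : (u, w) \notin M' by rewrite h hn.
  by apply/negP => /(matching_eq_fst hM' h') euu'; rewrite euu' eqxx in uu'.
- suff hn : (u', w) \notin M by rewrite h' hn orbT.
  by apply/negP => /(matching_eq_fst hM h) euu'; rewrite euu' eqxx in uu'.
Qed.

Lemma ddeg_man0 u w : (u, w) \in M -> (u, w) \in M' -> ddeg M M' (inl u) = 0.
Proof.
move=> h h'; apply: eq_card0 => -[//|v].
rewrite !inE -[_ \in _]/(dadj M M' (inl u) (inr v)) dadj_manE.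
apply/negP => /orP[/andP[hv]|/andP[hv]]; apply/negP/negPn.
- by rewrite -(matching_eq_snd hM h hv).
- by rewrite -(matching_eq_snd hM' h' hv).
Qed.

Lemma ddeg_woman0 u w : (u, w) \in M -> (u, w) \in M' -> ddeg M M' (inr w) = 0.
Proof.
move=> h h'; apply: eq_card0 => -[v|//].
rewrite !inE -[_ \in _]/(dadj M M' (inr w) (inl v)) dadj_womanE dadj_manE.
apply/negP => /orP[/andP[hv]|/andP[hv]]; apply/negP/negPn.
- by rewrite -(matching_eq_fst hM h hv).
- by rewrite -(matching_eq_fst hM' h' hv).
Qed.

Lemma ddeg2_man_partner u w' : ddeg M M' (inl u) = 2 -> (u, w') \in M' ->
  exists2 w, (u, w) \in M & (u, w) \notin M'.
Proof.
move=> deg2 h'; case: (boolP [exists w, ((u, w) \in M) && ((u, w) \notin M')]).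
  by case/existsP => w /andP[]; exists w.
rewrite negb_exists => /forallP none.
suff : ddeg M M' (inl u) <= #|pred1 (inr w' : U + W)| by rewrite deg2 card1.
apply: subset_leq_card; apply/subsetP => -[//|v].
rewrite -[_ \in _]/(dadj M M' (inl u) (inr v)) dadj_manE.
case/orP => /andP[hv hn]; first by move: (none v); rewrite hv hn.
by rewrite inE (matching_eq_snd hM' h' hv).
Qed.

End DifferenceGraphDegrees.
End Matchings.

Section Stability.
Variables (U W : finType) (pU : U -> rel W) (pW : W -> rel U).
Implicit Types (M : {set U * W}) (u : U) (w : W).

Lemma stable_perfect M : stable_in pU pW [set: W] M -> #|W| = #|U| ->
  perfect_matching M.
Proof.
move=> [[hM _] hst] hWU; apply: matching_perfect => // u; apply/matched_fstP.
apply/negPn/negP => hu.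
have : ~~ ([set: W] \subset [set p.2 | p in M]).
  apply/negP => /subset_leq_card; rewrite cardsT hWU card_matching_snd //.
  rewrite -(card_matching_fst hM) -cardsT leqNgt; apply/negP/negPn.
  by rewrite proper_card // properT; apply: contraNneq hu => ->; rewrite inE.
case/subsetPn => w _ hw; apply: (hst u w (in_setT w)).
(* (u, w) blocks M vacuously: both are unmatched *)
split; last split.
- by apply: contra hu => h; apply/matched_fstP; exists w.
- by move=> w' h; case/matched_fstP: hu; exists w'.
- by move=> u' h; case/matched_sndP: hw; exists u'.
Qed.

Lemma stable_woman_prefers (W' : {set W}) M u w :
  strict_total_order (pW w) -> stable_in pU pW W' M -> w \in W' -> (u, w) \notin M ->
  (forall w', (u, w') \in M -> pU u w w') ->
  exists2 u', (u', w) \in M & pW w u' u.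
Proof.
move=> sto [_ hst] hw hn hu.
case: (boolP [exists u', ((u', w) \in M) && pW w u' u]).
  by case/existsP => u' /andP[]; exists u'.
rewrite negb_exists => /forallP none; case: (hst u w hw); do 2!split => //.
move=> u' hu'; apply: sto_total => //; last by move: (none u'); rewrite hu'.
by apply: contraNneq hn => <-.
Qed.

Lemma stable_man_prefers (W' : {set W}) M u w :
  strict_total_order (pU u) -> stable_in pU pW W' M -> w \in W' -> (u, w) \notin M ->
  (forall u', (u', w) \in M -> pW w u u') ->
  exists2 w', (u, w') \in M & pU u w' w.
Proof.
move=> sto [_ hst] hw hn hw'.
case: (boolP [exists w', ((u, w') \in M) && pU u w' w]).
  by case/existsP => w' /andP[]; exists w'.
rewrite negb_exists => /forallP none; case: (hst u w hw); do 2!split => //.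
move=> w' h; apply: sto_total => //; last by move: (none w'); rewrite h.
by apply: contraNneq hn => <-.
Qed.

End Stability.

Section Components.
Variables (U W : finType) (pU : U -> rel W) (pW : W -> rel U) (M1 M2 : {set U * W}).
Local Notation D := (dadj M1 M2).

Lemma component_invariant v v' : connect D v v' -> [/\
  comp_cycle M1 M2 v = comp_cycle M1 M2 v',
  typeI pU pW M1 M2 v = typeI pU pW M1 M2 v' &
  typeII pU pW M1 M2 v = typeII pU pW M1 M2 v'].
Proof.
move=> /(same_connect (sym_connect_sym (@dadj_sym _ _ M1 M2))) e.
rewrite /comp_cycle /typeI /typeII.
by split; [|congr (_ && _)..]; apply: eq_forallb => x; rewrite e.
Qed.

Lemma typeI_man v u w1 w2 : typeI pU pW M1 M2 v -> connect D v (inl u) ->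
  (u, w1) \in M1 -> (u, w2) \in M2 -> pU u w2 w1.
Proof.
case/andP => /forallP/(_ u)/implyP hv _ /hv/forallP/(_ w1)/forallP/(_ w2)/implyP h h1 h2.
by apply: h; rewrite h1 h2.
Qed.

Lemma typeI_woman v w u1 u2 : typeI pU pW M1 M2 v -> connect D v (inr w) ->
  (u1, w) \in M1 -> (u2, w) \in M2 -> pW w u1 u2.
Proof.
case/andP => _ /forallP/(_ w)/implyP hv /hv/forallP/(_ u1)/forallP/(_ u2)/implyP h h1 h2.
by apply: h; rewrite h1 h2.
Qed.

Lemma typeII_man v u w1 w2 : typeII pU pW M1 M2 v -> connect D v (inl u) ->
  (u, w1) \in M1 -> (u, w2) \in M2 -> pU u w1 w2.
Proof.
case/andP => /forallP/(_ u)/implyP hv _ /hv/forallP/(_ w1)/forallP/(_ w2)/implyP h h1 h2.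
by apply: h; rewrite h1 h2.
Qed.

Lemma typeII_woman v w u1 u2 : typeII pU pW M1 M2 v -> connect D v (inr w) ->
  (u1, w) \in M1 -> (u2, w) \in M2 -> pW w u2 u1.
Proof.
case/andP => _ /forallP/(_ w)/implyP hv /hv/forallP/(_ u1)/forallP/(_ u2)/implyP h h1 h2.
by apply: h; rewrite h1 h2.
Qed.

Lemma comp_cycle_ddeg v x : comp_cycle M1 M2 v -> connect D v x -> ddeg M1 M2 x = 2.
Proof. by move=> /forallP/(_ x)/implyP h /h/eqP. Qed.

End Components.

Section StableExtension.
Variables (U W : finType) (W1 : {set W}) (pU : U -> rel W) (pW : W -> rel U).
Hypotheses (hpU : forall u, strict_total_order (pU u))
           (hpW : forall w, strict_total_order (pW w)).
Hypothesis hWU : #|W| = #|U|.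
Variables M1 M2 : {set U * W}.
Hypotheses (hM1 : stable_in pU pW W1 M1) (hM2 : stable_in pU pW [set: W] M2).

Local Notation D := (dadj M1 M2).

Let M1_matching : is_matching M1 := hM1.1.1.
Let M2_matching : is_matching M2 := hM2.1.1.
Let M1_W1 u w : (u, w) \in M1 -> w \in W1 := hM1.1.2 (u, w).
Let M2_perfect : perfect_matching M2 := stable_perfect hM2 hWU.
Let m1U := matching_eq_snd M1_matching.
Let m1W := matching_eq_fst M1_matching.
Let m2U := matching_eq_snd M2_matching.
Let m2W := matching_eq_fst M2_matching.
Let D_connect_sym : connect_sym D := sym_connect_sym (@dadj_sym _ _ M1 M2).

Definition prefers_M1 u :=
  [exists w1, exists w2, [&& (u, w1) \in M1, (u, w2) \in M2 & pU u w1 w2]].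

Lemma prefers_M1P u : reflect
  (exists w1 w2, [/\ (u, w1) \in M1, (u, w2) \in M2 & pU u w1 w2]) (prefers_M1 u).
Proof.
apply: (iffP existsP) => [[w1 /existsP[w2 /and3P[]]]|[w1 [w2 [h1 h2 p]]]].
  by exists w1, w2.
by exists w1; apply/existsP; exists w2; rewrite h1 h2.
Qed.

Lemma prefers_M1_next x y w : prefers_M1 x -> (x, w) \in M1 -> (y, w) \in M2 ->
  prefers_M1 y /\ pW w y x.
Proof.
case/prefers_M1P => w1 [w2 [h1 h2 px]] hx hy; rewrite -(m1U h1 hx) in hy *.
have hn2 : (x, w1) \notin M2.
  by apply/negP => /(m2U h2) e; rewrite e sto_irr in px.
have [y' hy' pyx] : exists2 y', (y', w1) \in M2 & pW w1 y' x.
  by apply: (stable_woman_prefers (hpW w1) hM2 (in_setT w1) hn2) => w' /(m2U h2) <-.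
rewrite (m2W hy' hy) in pyx; split=> //.
have hn1 : (y, w1) \notin M1.
  by apply/negP => /(m1W h1) e; rewrite e sto_irr in pyx.
have [w' h' pw'] : exists2 w', (y, w') \in M1 & pU y w' w1.
  by apply: (stable_man_prefers (hpU y) hM1 (M1_W1 h1) hn1) => u' /(m1W h1) <-.
by apply/prefers_M1P; exists w', w1.
Qed.

Lemma prefers_M1_prev u w : prefers_M1 u -> (u, w) \in M2 ->
  exists2 x, prefers_M1 x & (x, w) \in M1.
Proof.
move=> pu hu.
pose Q1 := [set p in M1 | prefers_M1 p.1].
pose P2 := [set p in M2 | p.2 \in [set q.2 | q in Q1]].
have Q1_matching : is_matching Q1.
  by apply: matching_subset M1_matching; apply/subsetP => p /setIdP[].
have P2_matching : is_matching P2.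
  by apply: matching_subset M2_matching; apply/subsetP => p /setIdP[].
have Q1_fst : [set p.1 | p in Q1] = [set x | prefers_M1 x].
  apply/setP => x; rewrite inE; apply/matched_fstP/idP => [[w'] /setIdP[] //|px].
  by case/prefers_M1P: (px) => w1 [w2 [h1 _ _]]; exists w1; rewrite inE h1.
have P2_snd : [set p.2 | p in P2] = [set p.2 | p in Q1].
  apply/setP => w'; apply/matched_sndP/idP => [[y] /setIdP[] //|hw'].
  by case: (M2_perfect.2.2 w') => y hy; exists y; rewrite inE hy.
(* x |-> M2-partner of the M1-partner of x is injective on men preferring M1,
   hence onto them *)
have P2_fst : [set p.1 | p in P2] = [set x | prefers_M1 x].
  apply/eqP; rewrite eqEcard card_matching_fst // -card_matching_snd // P2_snd.
  rewrite card_matching_snd // -card_matching_fst // Q1_fst leqnn andbT.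
  apply/subsetP => y /matched_fstP[w'] /setIdP[hy /matched_sndP[x]] /setIdP[hx px].
  by rewrite inE; apply: (prefers_M1_next px hx hy).1.
have /matched_fstP[w'] : u \in [set p.1 | p in P2] by rewrite P2_fst inE.
case/setIdP => /(m2U hu) <- /matched_sndP[x] /setIdP[hx px].
by exists x.
Qed.

Definition prefers_M1_vertex (x : U + W) : bool :=
  match x with
  | inl u => prefers_M1 u
  | inr w => [exists u, prefers_M1 u && ((u, w) \in M1)]
  end.

Lemma prefers_M1_vertex_adj x y : prefers_M1_vertex x -> D x y -> prefers_M1_vertex y.
Proof.
case: x y => [u|w] [u'|w'] //.
- move=> pu; have {}pu : prefers_M1 u := pu; rewrite dadj_manE => /orP[/andP[h _]|/andP[h _]].
    by apply/existsP; exists u; rewrite pu h.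
  by case: (prefers_M1_prev pu h) => x px hx; apply/existsP; exists x; rewrite px hx.
- case/existsP => x /andP[px hx]; rewrite dadj_womanE dadj_manE.
  by case/orP => /andP[h _]; [rewrite /= -(m1W hx h) | apply: (prefers_M1_next px hx h).1].
Qed.

Lemma prefers_M1_vertex_connect x y :
  prefers_M1_vertex x -> connect D x y -> prefers_M1_vertex y.
Proof.
move=> px /connectP[p]; elim: p x px => [|z p IH] x px /= => [_ -> //|/andP[hxz hp]].
exact: IH (prefers_M1_vertex_adj px hxz) hp.
Qed.

Lemma ddeg_prefers_M1_vertex x : prefers_M1_vertex x -> ddeg M1 M2 x = 2.
Proof.
case: x => [u|w] /=.
  case/prefers_M1P => w1 [w2 [h1 h2 p]]; apply: (ddeg_man2 M1_matching M2_matching h1 h2).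
  by apply: contraTneq p => ->; rewrite sto_irr.
case/existsP => x /andP[px hx]; have [y hy] := M2_perfect.2.2 w.
have [_ pyx] := prefers_M1_next px hx hy.
apply: (ddeg_woman2 M1_matching M2_matching hx hy); apply: contraTneq pyx => ->.
by rewrite sto_irr.
Qed.

Lemma prefers_M1_comp_cycle u : prefers_M1 u -> comp_cycle M1 M2 (inl u).
Proof.
move=> pu; apply/forallP => x; apply/implyP.
move=> /(prefers_M1_vertex_connect (x := inl u) pu).
by move/ddeg_prefers_M1_vertex/eqP.
Qed.

Lemma prefers_M1_typeII v u : prefers_M1 u -> connect D v (inl u) ->
  typeII pU pW M1 M2 v.
Proof.
move=> pu cvu; have pv x : connect D v x -> prefers_M1_vertex x.
  move=> cvx; apply: (prefers_M1_vertex_connect (x := inl u) pu).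
  by apply: connect_trans cvx; rewrite D_connect_sym.
apply/andP; split; apply/forallP.
- move=> y; apply/implyP => /pv/prefers_M1P[w1 [w2 [h1 h2 p]]].
  apply/forallP => a; apply/forallP => b; apply/implyP => /andP[ha hb].
  by rewrite (m1U ha h1) (m2U hb h2).
- move=> w; apply/implyP => /pv/existsP[x /andP[px hx]].
  apply/forallP => a; apply/forallP => b; apply/implyP => /andP[ha hb].
  by rewrite (m1W ha hx); apply: (prefers_M1_next px hx hb).2.
Qed.

Lemma no_prefers_M1_typeI v : comp_cycle M1 M2 v ->
  (forall u, connect D v (inl u) -> ~~ prefers_M1 u) -> typeI pU pW M1 M2 v.
Proof.
move=> cyc none; apply/andP; split; apply/forallP.
- move=> u; apply/implyP => cvu.
  apply/forallP => a; apply/forallP => b; apply/implyP => /andP[ha hb].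
  have nab : a != b.
    apply: contra_eqN (comp_cycle_ddeg cyc cvu) => /eqP eab.
    by rewrite eab in ha; rewrite (ddeg_man0 M1_matching M2_matching ha hb).
  apply: sto_total nab _ => //; apply: contra (none u cvu) => p.
  by apply/prefers_M1P; exists a, b.
- move=> w; apply/implyP => cvw.
  apply/forallP => u1; apply/forallP => u2; apply/implyP => /andP[h1 h2].
  have n12 : u1 != u2.
    apply: contra_eqN (comp_cycle_ddeg cyc cvw) => /eqP e12.
    by rewrite e12 in h1; rewrite (ddeg_woman0 M1_matching M2_matching h1 h2).
  have hn : (u2, w) \notin M1 by apply: contra n12 => /(m1W h1) ->.
  have cvu2 : connect D v (inl u2).
    by apply: connect_trans cvw (connect1 _); rewrite dadj_womanE dadj_manE h2 hn orbT.
  (* otherwise w would prefer u2 to her M1-partner, forcing u2 to prefer M1 *)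
  apply/negPn/negP => /(sto_total (hpW w) n12) p21; move/negP: (none u2 cvu2); apply.
  have [w' h' p'] : exists2 w', (u2, w') \in M1 & pU u2 w' w.
    by apply: (stable_man_prefers (hpU u2) hM1 (M1_W1 h1) hn) => u /(m1W h1) <-.
  by apply/prefers_M1P; exists w', w.
Qed.

Lemma comp_cycle_typeI_or_typeII v : comp_cycle M1 M2 v ->
  typeI pU pW M1 M2 v || typeII pU pW M1 M2 v.
Proof.
move=> cyc; case: (boolP [exists u, connect D v (inl u) && prefers_M1 u]).
  by case/existsP => u /andP[cvu pu]; rewrite (prefers_M1_typeII pu cvu) orbT.
rewrite negb_exists => /forallP none; rewrite no_prefers_M1_typeI // => u cvu.
by move: (none u); rewrite cvu.
Qed.

Local Notation M2' := (M2prime pU pW M1 M2).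
Local Notation cyc u := (comp_cycle M1 M2 (inl u)).
Local Notation tI u := (typeI pU pW M1 M2 (inl u)).
Local Notation tII u := (typeII pU pW M1 M2 (inl u)).

Lemma M2primeE u w : ((u, w) \in M2') =
  [|| ((u, w) \in M1) && ((u, w) \in M2),
      [&& (u, w) \in M2, (u, w) \notin M1 & ~~ cyc u || tI u] |
      [&& (u, w) \in M1, (u, w) \notin M2, cyc u & tII u]].
Proof.
rewrite inE /= !inE.
by case: ((u, w) \in M1); case: ((u, w) \in M2); rewrite /= ?andbT ?andbF.
Qed.

Lemma M2prime_sub : M2' \subset M1 :|: M2.
Proof.
apply/subsetP => -[u w]; rewrite M2primeE inE.
by case/or3P => [/andP[->]|/and3P[->]|/and4P[->]]; rewrite ?orbT.
Qed.

Lemma M2prime_parts_disjoint u w u' w' :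
  (u, w) \in M2 -> (u, w) \notin M1 -> ~~ cyc u || tI u ->
  (u', w') \in M1 -> (u', w') \notin M2 -> cyc u' -> tII u' ->
  ~ (u = u' \/ w = w').
Proof.
move=> h2 hn1 keep2 h1 hn2 cyc' tII'.
have cuw : connect D (inl u) (inr w) by rewrite connect1 // dadj_manE h2 hn1 orbT.
case=> e; subst.
- rewrite cyc' /= in keep2.
  by move: (typeI_man keep2 (connect0 _ _) h1 h2);
    rewrite (sto_asym (hpU _) (typeII_man tII' (connect0 _ _) h1 h2)).
- have cuu' : connect D (inl u) (inl u').
    by apply: connect_trans cuw (connect1 _); rewrite dadj_womanE dadj_manE h1 hn2.
  case: (component_invariant pU pW cuu') => ecyc _ etII.
  rewrite ecyc cyc' /= in keep2; rewrite -etII in tII'.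
  move: (typeI_woman keep2 cuw h1 h2).
  by rewrite (sto_asym (hpW _) (typeII_woman tII' cuw h1 h2)).
Qed.

Lemma M2prime_matching : is_matching M2'.
Proof.
move=> [u w] [u' w'] hp hq; move: hp hq; rewrite !M2primeE.
case/or3P => [/andP[p1 p2]|/and3P[p2 p1 pk]|/and4P[p1 p2 pc pt]];
case/or3P => [/andP[q1 q2]|/and3P[q2 q1 qk]|/and4P[q1 q2 qc qt]];
  try by [apply: M1_matching | apply: M2_matching].
- by move/(M2prime_parts_disjoint p2 p1 pk q1 q2 qc qt).
- move=> e; case: (M2prime_parts_disjoint q2 q1 qk p1 p2 pc pt).
  by case: e => /esym e; [left|right].
Qed.

Lemma M2prime_man u : exists w, (u, w) \in M2'.
Proof.
have [w2 h2] := M2_perfect.2.1 u.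
case: (boolP ((u, w2) \in M1)) => h1; first by exists w2; rewrite M2primeE h1 h2.
case: (boolP (~~ cyc u || tI u)) => keep2.
  by exists w2; rewrite M2primeE h2 h1 keep2 orbT.
move: keep2; rewrite negb_or negbK => /andP[cy ntI].
have t2 : tII u by move: (comp_cycle_typeI_or_typeII cy); rewrite (negbTE ntI).
have [w1 h1' hn2] := ddeg2_man_partner M2_matching (comp_cycle_ddeg cy (connect0 _ _)) h2.
by exists w1; rewrite M2primeE h1' hn2 cy t2 !orbT.
Qed.

Lemma M2prime_perfect : perfect_matching M2'.
Proof. exact: matching_perfect M2prime_matching hWU M2prime_man. Qed.

Lemma M2prime_man_weakly_prefers u w w2 : (u, w) \in M2' -> (u, w2) \in M2 ->
  w = w2 \/ pU u w w2.
Proof.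
move=> h h2; move: h; rewrite M2primeE.
case/or3P => [/andP[_ /(m2U h2) ->]|/and3P[/(m2U h2) -> _ _]|/and4P[h1 _ _ t2]]; try by left.
by right; apply: typeII_man t2 (connect0 _ _) h1 h2.
Qed.

Lemma M2prime_prefers_M1 u w : prefers_M1 u -> (u, w) \in M1 -> (u, w) \in M2'.
Proof.
move=> pu h1; case/prefers_M1P: (pu) => w1 [w2 [h1' h2 p]].
have ew := m1U h1' h1; subst w.
have hn2 : (u, w1) \notin M2 by apply/negP => /(m2U h2) e; rewrite e sto_irr in p.
by rewrite M2primeE h1 hn2 prefers_M1_comp_cycle // (prefers_M1_typeII pu) ?orbT.
Qed.

Lemma M2prime_stable : stable_in pU pW [set: W] M2'.
Proof.
split; first by split=> [|p _]; [exact: M2prime_matching | rewrite inE].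
move=> u w _ [_ [hU hW]].
have [u' hu'] := M2prime_perfect.2.2 w.
have [w2 h2] := M2_perfect.2.1 u.
have pw2 : pU u w w2.
  have [w' hw'] := M2prime_man u.
  case: (M2prime_man_weakly_prefers hw' h2) => [<-|]; first exact: hU.
  exact/sto_trans/(hU _ hw').
have hn2 : (u, w) \notin M2 by apply/negP => /(m2U h2) e; rewrite e sto_irr in pw2.
have [m hm pmu] : exists2 m, (m, w) \in M2 & pW w m u.
  by apply: (stable_woman_prefers (hpW w) hM2 (in_setT w) hn2) => w' /(m2U h2) <-.
have hu'1 : (u', w) \in M1.
  have /setUP[//|/(m2W hm) e] := subsetP M2prime_sub _ hu'.
  by move: (hW u' hu'); rewrite -e (sto_asym (hpW w) pmu).
have hn1 : (u, w) \notin M1.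
  by apply/negP => /(m1W hu'1) e; move: (hW u' hu'); rewrite e sto_irr.
have [w1 h1 p1] : exists2 w1, (u, w1) \in M1 & pU u w1 w.
  apply: (stable_man_prefers (hpU u) hM1 (M1_W1 hu'1) hn1) => x /(m1W hu'1) <-.
  exact: hW.
have pu : prefers_M1 u.
  by apply/prefers_M1P; exists w1, w2; split => //; apply: sto_trans p1 pw2.
by move: (hU w1 (M2prime_prefers_M1 pu h1)); rewrite (sto_asym (hpU u) p1).
Qed.

End StableExtension.

Theorem lemma4 (U W : finType) (W1 : {set W})
  (pU : U -> rel W) (pW : W -> rel U)
  (hpU : forall u, strict_total_order (pU u))
  (hpW : forall w, strict_total_order (pW w))
  (hcard1 : #|W1| <= #|W|) (hcard : #|W| = #|U|)
  (M1 M2 : {set U * W})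
  (hM1 : stable_in pU pW W1 M1)
  (hM2 : stable_in pU pW [set: W] M2) :
  perfect_matching (M2prime pU pW M1 M2) /\
  stable_in pU pW [set: W] (M2prime pU pW M1 M2).
Proof.
(* [hcard1] is automatic, W1 being a subset of W. *)
split; first exact: (M2prime_perfect hpU hpW hcard hM1 hM2).
exact: (M2prime_stable hpU hpW hcard hM1 hM2).
Qed.
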